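(* Let $(K,w_K)$ and $(H,w_H)$ be weighted graphs (1-dimensional weighted simplicial complexes) such that $(H,w_H)$ is a subgraph of $(K,w_K)$ and their proper difference $(L,w_L)$ exists, i.e. $L=K$, $w_L=w_K-w_H$ (with $w_H$ extended by $0$ outside $H$) and $\{F\in K:w_L(F)>0\}$ is a simplicial complex. Assume $w_K$ and $w_L$ satisfy the normalizing condition, and let $\lambda_1\le\dots\le\lambda_N$ and $\theta_1\le\dots\le\theta_N$ ($N$ the number of vertices of $K$) be the eigenvalues of the normalized graph Laplacians $\Delta^{up}_0(K)=\mathcal{L}^{up}_0(K,w_K)$ and $\Delta^{up}_0(L)=\mathcal{L}^{up}_0(L,w_L)$, respectively. With the conventions $\lambda_j=0$ for $1-\dim C^0(H,\mathbb{R})+\dim H^0(H,\mathbb{R})\le j\le 0$ and $\lambda_j=2$ for $N+1\le j\le N+\dim C^0(H,\mathbb{R})$, for all $k=1,\dots,N$: $$\lambda_{k-\dim C^0(H,\mathbb{R})+\dim H^0(H,\mathbb{R})}\le\theta_k\le\lambda_{k+\dim C^0(H,\mathbb{R})}.$$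
   Context: For a graph $G$ (vertices $S_0$, edges $S_1$) with weight function $w\ge0$ on vertices and edges, $C^0(G,\mathbb{R})$ is the space of functions on vertices with inner product $(f,g)=\sum_v w(v)f(v)g(v)$, $C^1$ the space of functions on oriented edges with $(\bar f,\bar g)=\sum_e w(e)\bar f(e)\bar g(e)$, $(\delta_0 f)([u,v])=f(v)-f(u)$, and the formal adjoint $(\delta_0^*\bar f)(v)=\sum_{e\ni v}\frac{w(e)}{w(v)}\mathrm{sgn}(v,\partial e)\bar f(e)$ if $w(v)\neq0$ and $0$ if $w(v)=0$, where $\mathrm{sgn}(v,\partial[u,v])=1$, $\mathrm{sgn}(u,\partial[u,v])=-1$. $\mathcal{L}^{up}_0(G,w)=\delta_0^*\delta_0$. A subgraph $(H,w_H)$ of $(K,w_K)$ is a subcomplex with $w_H\le w_K$ on its faces. The normalizing condition: $w(v)=\sum_{e\ni v}w(e)$ for every vertex $v$ that lies on at least one edge. $\dim C^0(H,\mathbb{R})$ is the number of vertices of $H$ and $\dim H^0(H,\mathbb{R})$ its number of connected components. *)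

From HB Require Import structures.
From mathcomp Require Import all_boot all_order all_algebra.
From mathcomp Require Import reals.
Set Implicit Arguments. Unset Strict Implicit. Unset Printing Implicit Defensive.
Import Order.TTheory GRing.Theory Num.Theory.
Local Open Scope ring_scope.

(* An (oriented) edge [u,v] is a
   pair (u,v) with u < v; an edge set is E : {set 'I_n * 'I_n}. *)

Section Graph.
Variables (R : realType) (n : nat).

Definition on_edge (v : 'I_n) (e : 'I_n * 'I_n) : bool := (v == e.1) || (v == e.2).

Definition esgn (v : 'I_n) (e : 'I_n * 'I_n) : R := if v == e.2 then 1 else -1.

Definition is_edge_set (E : {set 'I_n * 'I_n}) : Prop :=
  forall e, e \in E -> (e.1 < e.2)%N.

Definition delta0 (f : 'I_n -> R) (e : 'I_n * 'I_n) : R := f e.2 - f e.1.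

Definition delta0_adj (E : {set 'I_n * 'I_n}) (wV : 'I_n -> R)
  (wE : 'I_n * 'I_n -> R) (g : 'I_n * 'I_n -> R) (v : 'I_n) : R :=
  if wV v == 0 then 0
  else \sum_(e in E | on_edge v e) wE e / wV v * esgn v e * g e.

Definition Lup0 E wV wE (f : 'I_n -> R) : 'I_n -> R :=
  delta0_adj E wV wE (delta0 f).

Definition Lup0_mx E wV wE : 'M[R]_n :=
  \matrix_(i, j) Lup0 E wV wE (fun x => (x == j)%:R) i.

Definition nonneg_weights (E : {set 'I_n * 'I_n}) (wV : 'I_n -> R)
  (wE : 'I_n * 'I_n -> R) : Prop :=
  (forall v, 0 <= wV v) /\ (forall e, e \in E -> 0 <= wE e).

Definition normalizing (E : {set 'I_n * 'I_n}) (wV : 'I_n -> R)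
  (wE : 'I_n * 'I_n -> R) : Prop :=
  forall v, (exists2 e, e \in E & on_edge v e) ->
    wV v = \sum_(e in E | on_edge v e) wE e.

Definition subcomplex (E : {set 'I_n * 'I_n}) (VH : {set 'I_n})
  (EH : {set 'I_n * 'I_n}) : Prop :=
  EH \subset E /\ (forall e, e \in EH -> (e.1 \in VH) && (e.2 \in VH)).

Definition adj (EH : {set 'I_n * 'I_n}) : rel 'I_n :=
  fun u v => ((u, v) \in EH) || ((v, u) \in EH).

(* number of connected components of the graph (VH, EH) = dim H^0 *)
Definition n_components (VH : {set 'I_n}) (EH : {set 'I_n * 'I_n}) : nat :=
  #|[set [set v in VH | connect (adj EH) u v] | u in VH]|.

Definition eigenvalues_sorted (A : 'M[R]_n) (lam : 'I_n -> R) : Prop :=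
  char_poly A = \prod_(i < n) ('X - (lam i)%:P) /\
  (forall i j : 'I_n, (i <= j)%N -> lam i <= lam j).

(* extension lam_j (1-based index j : int) by 0 for j <= 0 and 2 for j > n *)
Definition ext_eig (lam : 'I_n -> R) (j : int) : R :=
  match j with
  | Posz m => if m is m'.+1 then
                (if insub m' : option 'I_n is Some i then lam i else 2)
              else 0
  | Negz _ => 0
  end.

End Graph.

(* Both Laplacians are generalized eigenproblems [S f = lambda D f] for real
   symmetric pencils, with [S] the weighted combinatorial Laplacian
   [sum_e w(e) b_e b_e^T] and [D] the diagonal of vertex weights.  Vertices of
   weight 0 carry zero rows of [S], so they may be given any positive weight.
   By the spectral theorem, for every [t] the eigenvalues [<= t] (resp. [>= t])
   of a pencil span a subspace of that dimension on which the Rayleigh quotient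
   is [<= t] (resp. [>= t]).  Three subspaces of total dimension [> 2N] meet
   nontrivially, which gives both bounds once a third space is found on which
   the two pencils compare: for the lower bound the functions constant on the
   connected components of [H] (dimension [N - |V_H| + dim H^0(H)]), where
   [S_K = S_L] and [D_L <= D_K]; for the upper bound the functions vanishing
   on [V_H] (dimension [N - |V_H|]), where the two pencils coincide. *)

From HB Require Import structures.
From mathcomp Require Import all_boot all_order all_algebra.
From mathcomp Require Import reals complex ring zify.
Import Order.TTheory GRing.Theory Num.Theory.
Set Implicit Arguments. Unset Strict Implicit. Unset Printing Implicit Defensive.
Local Open Scope ring_scope.

Lemma char_poly_conj (F : fieldType) n (P Q A : 'M[F]_n) :
  P *m Q = 1%:M -> char_poly (P *m A *m Q) = char_poly A.
Proof.
move=> PQ.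
have conjX : char_poly_mx (P *m A *m Q) =
    map_mx polyC P *m char_poly_mx A *m map_mx polyC Q.
  rewrite /char_poly_mx mulmxBr mulmxBl -!map_mxM mul_mx_scalar -scalemxAl.
  by rewrite -map_mxM PQ map_mx1 scalemx1.
rewrite /char_poly conjX !det_mulmx mulrC mulrA -det_mulmx -map_mxM.
by rewrite (mulmx1C PQ) map_mx1 det1 mul1r.
Qed.

Lemma submx_cap3_nz (F : fieldType) n m1 m2 m3
    (A : 'M[F]_(m1, n)) (B : 'M_(m2, n)) (D : 'M_(m3, n)) :
  (2 * n < \rank A + \rank B + \rank D)%N ->
  exists f : 'rV_n, [/\ f != 0, (f <= A)%MS, (f <= B)%MS & (f <= D)%MS].
Proof.
move=> rk.
have := mxrank_sum_cap A B; have := rank_leq_col (A + B)%MS.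
have := mxrank_sum_cap (A :&: B)%MS D; have := rank_leq_col ((A :&: B) + D)%MS.
move=> ? ? ? ?; have : (A :&: B :&: D)%MS != 0 by rewrite -mxrank_eq0; lia.
case/rowV0Pn=> f; rewrite !sub_capmx => /andP[/andP[fA fB] fD] f0.
by exists f.
Qed.

Section IndicatorMatrix.
Variables (F : fieldType) (n : nat) (P : {set {set 'I_n}}).

Definition indicator_mx : 'M[F]_(#|P|, n) :=
  \matrix_(k, j) (j \in (enum_val k : {set 'I_n}))%:R.

Lemma indicator_mxE (c : 'rV_#|P|) j :
  (c *m indicator_mx) 0 j = \sum_(k | j \in (enum_val k : {set 'I_n})) c 0 k.
Proof.
rewrite mxE [RHS]big_mkcond /=; apply: eq_bigr => k _.
by rewrite mxE; case: (_ \in _); rewrite ?mulr1 ?mulr0.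
Qed.

Lemma indicator_mx_vanish (f : 'rV_n) j :
  (f <= indicator_mx)%MS -> (forall B, B \in P -> j \notin B) -> f 0 j = 0.
Proof.
move=> /submxP[c ->] jP; rewrite indicator_mxE big_pred0 // => k.
by apply/negbTE/jP/enum_valP.
Qed.

Hypothesis trivP : trivIset P.

Lemma indicator_mx_const (f : 'rV_n) B x y :
  (f <= indicator_mx)%MS -> B \in P -> x \in B -> y \in B -> f 0 x = f 0 y.
Proof.
move=> /submxP[c ->] PB xB yB; rewrite !indicator_mxE; apply: eq_bigl => k.
have Pk : (enum_val k : {set 'I_n}) \in P by exact: enum_valP.
apply/idP/idP => [xk|yk].
  by rewrite -(def_pblock trivP Pk xk) (def_pblock trivP PB xB).
by rewrite -(def_pblock trivP Pk yk) (def_pblock trivP PB yB).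
Qed.

Lemma indicator_mx_rank : set0 \notin P -> \rank indicator_mx = #|P|.
Proof.
move=> P0; apply/eqP; rewrite eqn_leq rank_leq_row /=.
suff /eqP ker0 : kermx indicator_mx == 0.
  by have := mxrank_ker indicator_mx; rewrite ker0 mxrank0 => /esym/eqP; rewrite subn_eq0.
apply/rowV0P => v /sub_kermxP v0; apply/rowP => k; rewrite mxE.
have Pk : (enum_val k : {set 'I_n}) \in P by exact: enum_valP.
have [x xk] : exists x, x \in (enum_val k : {set 'I_n}).
  by apply/set0Pn; apply: contraNneq P0 => <-.
have /rowP/(_ x) := v0; rewrite indicator_mxE mxE (big_pred1 k) // => l /=.
apply/idP/eqP => [xl|-> //]; apply/enum_val_inj.
by rewrite -(def_pblock trivP Pk xk) (def_pblock trivP (enum_valP l) xl).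
Qed.

End IndicatorMatrix.

Section Singletons.
Variable n : nat.

Definition singletons (I : {set 'I_n}) : {set {set 'I_n}} := [set [set i] | i in I].

Lemma trivIset_singletons (I : {set 'I_n}) : trivIset (singletons I).
Proof.
apply/trivIsetP => _ _ /imsetP[i _ ->] /imsetP[j _ ->] ij.
by rewrite disjoints1 inE; apply: contraNneq ij => ->.
Qed.

Lemma set0_notin_singletons (I : {set 'I_n}) : set0 \notin singletons I.
Proof. by apply/imsetP => -[i _ /esym/eqP]; rewrite -cards_eq0 cards1. Qed.

Lemma card_singletons (I : {set 'I_n}) : #|singletons I| = #|I|.
Proof. exact/card_imset/set1_inj. Qed.

Lemma cover_singletons (I : {set 'I_n}) : cover (singletons I) = I.
Proof.
rewrite cover_imset; apply/setP => x; apply/bigcupP/idP => [[i iI]|xI].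
  by rewrite inE => /eqP->.
by exists x; rewrite ?inE.
Qed.

Lemma notin_singletons (I B : {set 'I_n}) j :
  j \notin I -> B \in singletons I -> j \notin B.
Proof. by move=> jI /imsetP[i iI ->]; rewrite inE; apply: contraNneq jI => ->. Qed.

End Singletons.

Section SortedCount.
Variables (disp : Order.disp_t) (T : porderType disp) (n : nat) (lam : 'I_n -> T).
Hypothesis lam_sorted : forall i j : 'I_n, (i <= j)%N -> (lam i <= lam j)%O.

Lemma card_le_sorted (k : 'I_n) : (k.+1 <= #|[set i | (lam i <= lam k)%O]|)%N.
Proof.
have w_inj : injective (widen_ord (ltn_ord k)) by move=> i j /(congr1 val) /= /val_inj.
rewrite -[k.+1]card_ord -(card_imset _ w_inj).
apply/subset_leq_card/subsetP => _ /imsetP[i _ ->]; rewrite inE.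
by apply: lam_sorted; rewrite /= -ltnS.
Qed.

Lemma card_ge_sorted (k : 'I_n) : (n - k <= #|[set i | (lam k <= lam i)%O]|)%N.
Proof.
have up_lt (i : 'I_(n - k)) : (k + i < n)%N by rewrite -ltn_subRL.
pose up i := Ordinal (up_lt i).
have up_inj : injective up by move=> i j /(congr1 val) /= /addnI /val_inj.
rewrite -[(n - k)%N]card_ord -(card_imset _ up_inj).
apply/subset_leq_card/subsetP => _ /imsetP[i _ ->]; rewrite inE.
by apply: lam_sorted; rewrite leq_addr.
Qed.

End SortedCount.

Section Rayleigh.
Variables (C : numClosedFieldType) (n : nat).
Local Open Scope sesquilinear_scope.

Definition qform (A : 'M[C]_n) (f : 'rV_n) : C := (f *m A *m f ^t*) 0 0.

Lemma qformM (B A : 'M[C]_n) f : qform (B *m A *m B ^t*) f = qform A (f *m B).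
Proof. by rewrite /qform trmx_mul map_mxM !mulmxA. Qed.

Lemma qformE A f : qform A f = \sum_i \sum_j f 0 i * A i j * (f 0 j)^*.
Proof.
rewrite /qform mxE exchange_big /=; apply: eq_bigr => j _.
by rewrite !mxE big_distrl.
Qed.

Lemma qform_diag (d : 'rV[C]_n) f :
  qform (diag_mx d) f = \sum_j d 0 j * (f 0 j * (f 0 j)^*).
Proof.
rewrite /qform mul_mx_diag !mxE; apply: eq_bigr => j _.
by rewrite !mxE mulrCA mulrA.
Qed.

Lemma qform1 f : qform 1%:M f = \sum_j f 0 j * (f 0 j)^*.
Proof.
by rewrite -diag_const_mx qform_diag; apply: eq_bigr => j _; rewrite mxE mul1r.
Qed.

Definition rayleigh_spaces (A D : 'M[C]_n) (lam : 'I_n -> C) : Prop :=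
  forall t,
  (exists m (U : 'M_(m, n)), (#|[set i | (lam i <= t)%R]| <= \rank U)%N /\
     forall f, (f <= U)%MS -> qform A f <= t * qform D f) /\
  (exists m (V : 'M_(m, n)), (#|[set i | (t <= lam i)%R]| <= \rank V)%N /\
     forall f, (f <= V)%MS -> t * qform D f <= qform A f).

Lemma rayleigh_spaces_congr (B A D : 'M[C]_n) lam : B \in unitmx ->
  rayleigh_spaces A D lam ->
  rayleigh_spaces (B *m A *m B ^t*) (B *m D *m B ^t*) lam.
Proof.
move=> Bu AD t; have [[m [U [rU HU]]] [m' [V [rV HV]]]] := AD t.
have rkB m'' (W : 'M_(m'', n)) : \rank (W *m invmx B) = \rank W.
  by rewrite mxrankMfree // row_free_unit unitmx_inv.
have subB m'' (W : 'M_(m'', n)) f : (f <= W *m invmx B)%MS -> (f *m B <= W)%MS.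
  by move=> /submxP[c ->]; rewrite mulmxA mulmxKV // submxMl.
split; [exists m, (U *m invmx B) | exists m', (V *m invmx B)];
  rewrite rkB; split=> // f /subB; rewrite !qformM; [exact: HU | exact: HV].
Qed.

Lemma card_preim_perm (T : eqType) (a b : 'I_n -> T) (Q : pred T) :
  perm_eq [seq a i | i <- enum 'I_n] [seq b i | i <- enum 'I_n] ->
  #|[set i | Q (a i)]| = #|[set i | Q (b i)]|.
Proof.
have cnt (c : 'I_n -> T) : #|[set i | Q (c i)]| = count Q [seq c i | i <- enum 'I_n].
  by rewrite count_map cardsE cardE /enum_mem size_filter /= filter_predT.
by move=> /permP ab; rewrite !cnt ab.
Qed.

Lemma diag_rayleigh_spaces (sp : 'rV[C]_n) lam :
  perm_eq [seq sp 0 i | i <- enum 'I_n] [seq lam i | i <- enum 'I_n] ->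
  rayleigh_spaces (diag_mx sp) 1%:M lam.
Proof.
move=> splam t; rewrite perm_sym in splam.
have cardL := card_preim_perm (fun x => x <= t) splam.
have cardG := card_preim_perm (fun x => t <= x) splam.
pose space (I : {set 'I_n}) := indicator_mx C (singletons I).
have rk_space I : \rank (space I) = #|I|.
  by rewrite indicator_mx_rank ?card_singletons ?trivIset_singletons
    ?set0_notin_singletons.
have space_qform I (f : 'rV_n) : (f <= space I)%MS ->
    qform (diag_mx sp) f - t * qform 1%:M f =
    \sum_(j in I) (sp 0 j - t) * (f 0 j * (f 0 j)^*).
  move=> fI; rewrite qform_diag qform1 mulr_sumr -sumrB (bigID (mem I)) /=.
  rewrite [X in _ + X]big1 ?addr0 => [|j jI].
    by apply: eq_bigr => j _; rewrite mulrBl.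
  rewrite (_ : f 0 j = 0) ?mul0r ?mulr0 ?subrr //.
  by apply: indicator_mx_vanish fI _ => B; apply: notin_singletons.
split; [exists _, (space [set i | sp 0 i <= t]) |
       exists _, (space [set i | t <= sp 0 i])].
  rewrite rk_space cardL; split=> // f /space_qform; rewrite -subr_le0 => ->.
  apply: sumr_le0 => j; rewrite inE => spt.
  by apply: mulr_le0_ge0; [rewrite subr_le0 | exact: mul_conjC_ge0].
rewrite rk_space cardG; split=> // f /space_qform; rewrite -subr_ge0 => ->.
apply: sumr_ge0 => j; rewrite inE => spt.
by apply: mulr_ge0; [rewrite subr_ge0 | exact: mul_conjC_ge0].
Qed.

Lemma normal_rayleigh_spaces (A : 'M[C]_n) lam : A \is normalmx ->
  char_poly A = \prod_i ('X - (lam i)%:P) -> rayleigh_spaces A 1%:M lam.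
Proof.
move=> /orthomx_spectralP Adiag charA.
set P := spectralmx A in Adiag; set sp := spectral_diag A in Adiag.
have Pu : P \is unitarymx by exact: spectral_unitarymx.
have PtP : P ^t* *m P = 1%:M by apply/mulmx1C/unitarymxP.
have perm_sp : perm_eq [seq sp 0 i | i <- enum 'I_n] [seq lam i | i <- enum 'I_n].
  apply: prod_XsubC_eq; rewrite !big_map -enumT !big_enum /= -charA Adiag.
  rewrite char_poly_conj ?mulVmx ?unitarymx_unit // char_poly_trig ?diag_mx_is_trig //.
  by apply: eq_bigr => i _; rewrite mxE eqxx mulr1n.
have Ptu : P ^t* \in unitmx by case: (mulmx1_unit PtP).
have := rayleigh_spaces_congr Ptu (diag_rayleigh_spaces perm_sp).
by rewrite trmxCK mulmx1 PtP -invmx_unitary // -Adiag.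
Qed.

Lemma hermitian_pencil_rayleigh_spaces (S : 'M[C]_n) (d : 'I_n -> C) lam :
  S ^t* = S -> (forall i, 0 < d i) ->
  char_poly (\matrix_(i, j) (S i j / d i)) = \prod_i ('X - (lam i)%:P) ->
  rayleigh_spaces S (diag_mx (\row_i d i)) lam.
Proof.
move=> Sadj d_gt0 charS.
have [h [h0 hh hconj]] : exists h : 'I_n -> C,
    [/\ forall i, h i != 0, forall i, h i * h i = d i & forall i, (h i)^* = h i].
  exists (fun i => sqrtC (d i)); split=> i; first by rewrite gt_eqF // sqrtC_gt0.
    by rewrite -expr2 sqrtCK.
  by rewrite geC0_conj // sqrtC_ge0 ltW.
pose Dh := diag_mx (\row_i h i); pose Dhi := diag_mx (\row_i (h i)^-1).
have DhDhi : Dh *m Dhi = 1%:M.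
  by apply/matrixP => i j; rewrite mul_diag_mx !mxE; case: eqP; rewrite ?mulr0 ?divff.
have Dh_adj : Dh ^t* = Dh.
  rewrite /Dh tr_diag_mx map_diag_mx; apply/matrixP => i j; rewrite !mxE.
  by congr (_ *+ _); apply: hconj.
have Dhi_adj : Dhi ^t* = Dhi.
  rewrite /Dhi tr_diag_mx map_diag_mx; apply/matrixP => i j; rewrite !mxE.
  by congr (_ *+ _); rewrite fmorphV; congr (_^-1); apply: hconj.
pose T := Dhi *m S *m Dhi.
have Tn : T \is normalmx.
  have Tadj : T ^t* = T by rewrite /T !trmx_mul !map_mxM Sadj Dhi_adj mulmxA.
  by apply/normalmxP; rewrite Tadj.
have charT : char_poly T = \prod_i ('X - (lam i)%:P).
  rewrite -charS -[in RHS](char_poly_conj _ DhDhi); congr char_poly.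
  apply/matrixP => i j; rewrite /T !mul_mx_diag !mul_diag_mx !mxE -hh.
  by field; rewrite !h0.
have Dhu : Dh \in unitmx by case: (mulmx1_unit DhDhi).
have := rayleigh_spaces_congr Dhu (normal_rayleigh_spaces Tn charT).
rewrite Dh_adj /T !mulmxA DhDhi mul1mx -mulmxA (mulmx1C DhDhi) mulmx1 mulmx1.
congr (rayleigh_spaces _ _ _); apply/matrixP => i j; rewrite mul_diag_mx !mxE.
by case: eqP => [->|]; rewrite ?mulr0n ?mulr0 ?hh.
Qed.

Lemma rayleigh_spaces_lb (A D : 'M[C]_n) lam a :
  rayleigh_spaces A D lam -> (forall f, f != 0 -> 0 < qform D f) ->
  (forall f, a * qform D f <= qform A f) -> forall i, a <= lam i.
Proof.
move=> ADlam D_gt0 aA i; have [[m [U [rU HU]]] _] := ADlam (lam i).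
have /rowV0Pn[f fU f0] : U != 0.
  rewrite -mxrank_eq0 -lt0n; apply: leq_trans rU; apply/card_gt0P.
  by exists i; rewrite inE.
by rewrite -(ler_pM2r (D_gt0 f f0)); apply: le_trans (aA f) (HU f fU).
Qed.

Lemma rayleigh_spaces_ub (A D : 'M[C]_n) lam b :
  rayleigh_spaces A D lam -> (forall f, f != 0 -> 0 < qform D f) ->
  (forall f, qform A f <= b * qform D f) -> forall i, lam i <= b.
Proof.
move=> ADlam D_gt0 Ab i; have [_ [m [V [rV HV]]]] := ADlam (lam i).
have /rowV0Pn[f fV f0] : V != 0.
  rewrite -mxrank_eq0 -lt0n; apply: leq_trans rV; apply/card_gt0P.
  by exists i; rewrite inE.
by rewrite -(ler_pM2r (D_gt0 f f0)); apply: le_trans (HV f fV) (Ab f).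
Qed.

Lemma rayleigh_spaces_le (A1 D1 A2 D2 : 'M[C]_n) lam1 lam2 (j k : 'I_n)
    m (W : 'M_(m, n)) :
  rayleigh_spaces A1 D1 lam1 -> rayleigh_spaces A2 D2 lam2 ->
  (forall i i' : 'I_n, (i <= i')%N -> lam1 i <= lam1 i') ->
  (forall i i' : 'I_n, (i <= i')%N -> lam2 i <= lam2 i') ->
  (n + j < k.+1 + \rank W)%N ->
  (forall f, (f <= W)%MS ->
     qform A1 f = qform A2 f /\ lam2 k * qform D2 f <= lam2 k * qform D1 f) ->
  (forall f, f != 0 -> 0 < qform D1 f) ->
  lam1 j <= lam2 k.
Proof.
move=> sp1 sp2 sorted1 sorted2 rkW AW D1_gt0.
have [_ [m1 [V [rV HV]]]] := sp1 (lam1 j).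
have [[m2 [U [rU HU]]] _] := sp2 (lam2 k).
have rV' := leq_trans (card_ge_sorted sorted1 j) rV.
have rU' := leq_trans (card_le_sorted sorted2 k) rU.
have [f [f0 fV fU fW]] : exists f : 'rV_n,
    [/\ f != 0, (f <= V)%MS, (f <= U)%MS & (f <= W)%MS].
  by apply: submx_cap3_nz; have := ltn_ord j; lia.
have [A12 D21] := AW f fW.
rewrite -(ler_pM2r (D1_gt0 f f0)); apply: le_trans (HV f fV) _.
by rewrite A12; apply: le_trans (HU f fU) D21.
Qed.

End Rayleigh.

(* The forms live over [R[i]], where the spectral theorem ([spectralmx]) is
   available. *)
Section WeightedGraphForms.
Variables (R : realType) (n : nat).
Local Notation C := R[i].
Local Notation rc := (real_complex R).
Local Open Scope sesquilinear_scope.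
Implicit Types (E : {set 'I_n * 'I_n}) (wV d : 'I_n -> R) (wE : 'I_n * 'I_n -> R).
Implicit Types (f : 'rV[C]_n).

Definition incidence (e : 'I_n * 'I_n) (x : 'I_n) : R := (e.2 == x)%:R - (e.1 == x)%:R.

Definition comb_lap_mx E wE : 'M[R]_n :=
  \matrix_(i, j) \sum_(e in E) wE e * (incidence e i * incidence e j).

Definition lap_form E wE : 'M[C]_n := map_mx rc (comb_lap_mx E wE).

Definition deg_form d : 'M[C]_n := map_mx rc (diag_mx (\row_i d i)).

Lemma conjC_rc (x : R) : (rc x)^* = rc x.
Proof. exact: conjc_real. Qed.

Lemma edge_ends_neq E e : is_edge_set E -> e \in E -> e.1 != e.2.
Proof. by move=> Eedge eE; rewrite -val_eqE /= ltn_eqF ?Eedge. Qed.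

Lemma incidence_off e x : ~~ on_edge x e -> incidence e x = 0.
Proof.
rewrite /on_edge /incidence negb_or => /andP[x1 x2].
by rewrite eq_sym (negPf x2) eq_sym (negPf x1) subrr.
Qed.

Lemma esgn_incidence E e x : is_edge_set E -> e \in E -> on_edge x e ->
  esgn R x e = incidence e x.
Proof.
move=> Eedge eE; have e12 := edge_ends_neq Eedge eE.
rewrite /on_edge /esgn /incidence.
by case/orP => /eqP ->; rewrite ?eqxx ?(negPf e12) 1?eq_sym ?(negPf e12) ?subr0 ?sub0r.
Qed.

Lemma Lup0_mx_comb E wV wE d :
  is_edge_set E -> nonneg_weights E wV wE -> normalizing E wV wE ->
  (forall i, wV i != 0 -> d i = wV i) ->
  Lup0_mx E wV wE = \matrix_(i, j) (comb_lap_mx E wE i j / d i).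
Proof.
move=> Eedge [_ wE_ge0] wnorm dwV; apply/matrixP => i j.
rewrite !mxE /Lup0 /delta0_adj; have [wi0|wi0] := eqVneq (wV i) 0.
  rewrite big1 ?mul0r // => e eE.
  have [ie|ie] := boolP (on_edge i e); last by rewrite incidence_off // mul0r mulr0.
  have := wnorm i (ex_intro2 _ _ e eE ie); rewrite wi0 => /esym/psumr_eq0P we0.
  by rewrite we0 ?mul0r ?eE // => e' /andP[e'E _]; apply: wE_ge0.
rewrite dwV // [in RHS](bigID (on_edge i)) /= [X in _ + X]big1 ?addr0; last first.
  by move=> e /andP[_ ie]; rewrite incidence_off // mul0r mulr0.
rewrite mulr_suml; apply: eq_bigr => e /andP[eE ie].
by rewrite (esgn_incidence Eedge eE ie) /delta0 /incidence; field.
Qed.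

Lemma sum_incidence (g : 'I_n -> C) e :
  \sum_i rc (incidence e i) * g i = g e.2 - g e.1.
Proof.
have pick a : \sum_i (a == i)%:R * g i = g a.
  rewrite (bigD1 a) //= eqxx mul1r big1 ?addr0 // => i /negPf.
  by rewrite eq_sym => ->; rewrite mul0r.
by under eq_bigr do rewrite rmorphB !rmorph_nat mulrBl; rewrite sumrB !pick.
Qed.

Lemma qform_lap E wE f : qform (lap_form E wE) f =
  \sum_(e in E) rc (wE e) * ((f 0 e.2 - f 0 e.1) * (f 0 e.2 - f 0 e.1)^*).
Proof.
rewrite qformE; transitivity (\sum_(e in E) \sum_i \sum_j
    f 0 i * (rc (wE e) * (rc (incidence e i) * rc (incidence e j))) * (f 0 j)^*).
  rewrite [RHS]exchange_big; apply: eq_bigr => i _.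
  rewrite [RHS]exchange_big; apply: eq_bigr => j _.
  rewrite !mxE rmorph_sum mulr_sumr mulr_suml; apply: eq_bigr => e _.
  by rewrite !rmorphM.
apply: eq_bigr => e _; have s1 := sum_incidence (fun i => f 0 i) e.
have s2 : \sum_j rc (incidence e j) * (f 0 j)^* = (f 0 e.2 - f 0 e.1)^*.
  by rewrite sum_incidence rmorphB.
rewrite -s2 -s1 big_distrl /= mulr_sumr; apply: eq_bigr => i _.
by rewrite !mulr_sumr; apply: eq_bigr => j _; ring.
Qed.

Lemma lap_form_adj E wE : (lap_form E wE) ^t* = lap_form E wE.
Proof.
apply/matrixP => i j; rewrite !mxE conjC_rc; congr rc.
by apply: eq_bigr => e _; rewrite [incidence e j * _]mulrC.
Qed.

Lemma qform_lap_ge0 E wE f : (forall e, e \in E -> 0 <= wE e) ->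
  0 <= qform (lap_form E wE) f.
Proof.
move=> wE_ge0; rewrite qform_lap; apply: sumr_ge0 => e eE.
by apply: mulr_ge0; [rewrite ler0c wE_ge0 | exact: mul_conjC_ge0].
Qed.

Lemma qform_lap_eq E (wE1 wE2 : 'I_n * 'I_n -> R) f :
  (forall e, e \in E -> wE1 e != wE2 e -> f 0 e.1 = f 0 e.2) ->
  qform (lap_form E wE1) f = qform (lap_form E wE2) f.
Proof.
move=> fE; rewrite !qform_lap; apply: eq_bigr => e eE.
have [-> //|w12] := eqVneq (wE1 e) (wE2 e).
by rewrite (fE e eE w12) subrr mul0r !mulr0.
Qed.

Lemma qform_deg d f : qform (deg_form d) f = \sum_j rc (d j) * (f 0 j * (f 0 j)^*).
Proof.
by rewrite /deg_form map_diag_mx qform_diag; apply: eq_bigr => j _; rewrite !mxE.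
Qed.

Lemma qform_deg_gt0 d f : (forall i, 0 < d i) -> f != 0 -> 0 < qform (deg_form d) f.
Proof.
move=> d_gt0 f0; rewrite qform_deg lt_def.
have term_ge0 j : 0 <= rc (d j) * (f 0 j * (f 0 j)^*).
  by apply: mulr_ge0; [rewrite ler0c ltW | exact: mul_conjC_ge0].
rewrite sumr_ge0 ?andbT //; apply: contra f0 => /eqP/psumr_eq0P f_0.
apply/eqP/rowP => j; rewrite mxE; have /eqP := f_0 (fun i _ => term_ge0 i) j isT.
have dj0 : 0 < rc (d j) := etrans (ltcR 0 (d j)) (d_gt0 j).
by rewrite mulf_eq0 mul_conjC_eq0 gt_eqF // => /eqP.
Qed.

Lemma qform_deg_le (d1 d2 : 'I_n -> R) f : (forall i, d1 i <= d2 i) ->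
  qform (deg_form d1) f <= qform (deg_form d2) f.
Proof.
move=> d12; rewrite !qform_deg; apply: ler_sum => j _.
by apply: ler_wpM2r; [exact: mul_conjC_ge0 | rewrite lecR].
Qed.

Lemma qform_deg_eq (d1 d2 : 'I_n -> R) f : (forall i, d1 i != d2 i -> f 0 i = 0) ->
  qform (deg_form d1) f = qform (deg_form d2) f.
Proof.
move=> fd; rewrite !qform_deg; apply: eq_bigr => j _.
have [-> //|d12] := eqVneq (d1 j) (d2 j).
by rewrite fd // mul0r !mulr0.
Qed.

Lemma sum_edge_ends E (g : 'I_n * 'I_n -> C) (a : 'I_n -> C) :
  is_edge_set E ->
  \sum_(e in E) g e * (a e.1 + a e.2) = \sum_v a v * \sum_(e in E | on_edge v e) g e.
Proof.
move=> Eedge; under [RHS]eq_bigr do rewrite mulr_sumr.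
rewrite (exchange_big_dep (mem E)) /=; last by move=> ? ? _ /andP[].
apply: eq_bigr => e eE; have e12 := edge_ends_neq Eedge eE.
rewrite (eq_bigl (fun v => (v == e.1) || (v == e.2))) => [|v]; last by rewrite eE.
rewrite (bigD1 e.1) ?eqxx //= (bigD1 e.2) ?eqxx ?orbT 1?eq_sym //= big1 ?addr0.
  by rewrite mulrDr ![g e * _]mulrC.
by move=> v; case: (v == e.1); case: (v == e.2).
Qed.

Lemma incident_weight_le_deg E wV wE d v :
  normalizing E wV wE -> (forall i, 0 < d i) -> (forall i, wV i != 0 -> d i = wV i) ->
  \sum_(e in E | on_edge v e) wE e <= d v.
Proof.
move=> wnorm d_gt0 dwV.
have [e /andP[eE ve]|no_edge] := pickP (fun e => (e \in E) && on_edge v e).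
  rewrite -(wnorm v (ex_intro2 _ _ e eE ve)).
  by have [->|/dwV->] := eqVneq (wV v) 0; [exact: ltW|].
by rewrite big_pred0 ?ltW.
Qed.

Lemma qform_lap_le2 E wV wE d f :
  is_edge_set E -> nonneg_weights E wV wE -> normalizing E wV wE ->
  (forall i, 0 < d i) -> (forall i, wV i != 0 -> d i = wV i) ->
  qform (lap_form E wE) f <= 2 * qform (deg_form d) f.
Proof.
move=> Eedge [_ wE_ge0] wnorm d_gt0 dwV; pose a v := f 0 v * (f 0 v)^*.
rewrite qform_lap qform_deg.
apply: (@le_trans _ _ (\sum_(e in E) rc (wE e) * (2 * (a e.1 + a e.2)))).
  apply: ler_sum => e eE; apply: ler_wpM2l; first by rewrite ler0c wE_ge0.
  rewrite -subr_ge0 (_ : _ - _ = (f 0 e.2 + f 0 e.1) * (f 0 e.2 + f 0 e.1)^*).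
    exact: mul_conjC_ge0.
  by rewrite /a rmorphB rmorphD /=; ring.
under eq_bigr do rewrite mulrCA.
rewrite -mulr_sumr sum_edge_ends // ler_wpM2l //; apply: ler_sum => v _.
rewrite -rmorph_sum mulrC; apply: ler_wpM2r; first exact: mul_conjC_ge0.
by rewrite lecR (incident_weight_le_deg _ wnorm).
Qed.

Section NormalizedLaplacian.
Variables (E : {set 'I_n * 'I_n}) (wV : 'I_n -> R) (wE : 'I_n * 'I_n -> R).
Variables (d : 'I_n -> R) (lam : 'I_n -> R).
Hypotheses (Eedge : is_edge_set E) (wnn : nonneg_weights E wV wE).
Hypotheses (wnorm : normalizing E wV wE) (d_gt0 : forall i, 0 < d i).
Hypothesis dwV : forall i, wV i != 0 -> d i = wV i.
Hypothesis lam_eig : eigenvalues_sorted (Lup0_mx E wV wE) lam.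

Lemma Lup0_rayleigh_spaces :
  rayleigh_spaces (lap_form E wE) (deg_form d) (fun i => rc (lam i)).
Proof.
have [charL _] := lam_eig; rewrite (Lup0_mx_comb Eedge wnn wnorm dwV) in charL.
have -> : deg_form d = diag_mx (\row_i rc (d i)).
  by rewrite /deg_form map_diag_mx; congr diag_mx; apply/rowP => i; rewrite !mxE.
apply: hermitian_pencil_rayleigh_spaces (lap_form_adj E wE) _ _ => [i|].
  exact: etrans (ltcR 0 (d i)) (d_gt0 i).
have -> : \matrix_(i, j) (lap_form E wE i j / rc (d i)) =
    map_mx rc (\matrix_(i, j) (comb_lap_mx E wE i j / d i)).
  by apply/matrixP => i j; rewrite !mxE fmorph_div.
rewrite -map_char_poly charL rmorph_prod; apply: eq_bigr => i _.
exact: map_polyXsubC.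
Qed.

Lemma Lup0_eig_bounds i : 0 <= lam i <= 2.
Proof.
have D_gt0 f : f != 0 -> 0 < qform (deg_form d) f by exact: qform_deg_gt0.
rewrite -!lecR; apply/andP; split.
  apply: rayleigh_spaces_lb Lup0_rayleigh_spaces D_gt0 _ i => f.
  by rewrite mul0r qform_lap_ge0 //; case: wnn.
apply: rayleigh_spaces_ub Lup0_rayleigh_spaces D_gt0 _ i => f.
by rewrite rmorph_nat (qform_lap_le2 _ Eedge wnn).
Qed.

End NormalizedLaplacian.

End WeightedGraphForms.

Section Components.
Variables (n : nat) (VH : {set 'I_n}) (EH : {set 'I_n * 'I_n}).
Hypothesis EHV : forall e, e \in EH -> (e.1 \in VH) && (e.2 \in VH).

(* The connected components of the graph ['I_n] with edges [EH]. *)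
Definition component_blocks : {set {set 'I_n}} :=
  equivalence_partition (connect (adj EH)) VH :|: singletons (~: VH).

Lemma connect_adj_equivalence : equivalence_rel (connect (adj EH)).
Proof.
have sym : connect_sym (adj EH) by apply: sym_connect_sym => x y; rewrite /adj orbC.
by move=> x y z; split=> [|/(same_connect sym)]; rewrite ?connect0.
Qed.

Lemma components_partition : partition (equivalence_partition (connect (adj EH)) VH) VH.
Proof.
by apply: equivalence_partitionP => x y z _ _ _; apply: connect_adj_equivalence.
Qed.

Lemma trivIset_component_blocks : trivIset component_blocks.
Proof.
have /and3P[/eqP coverC trivC _] := components_partition.
apply: trivIsetU trivC (trivIset_singletons _) _.
by rewrite coverC cover_singletons disjoints_subset setCK.
Qed.

Lemma set0_notin_component_blocks : set0 \notin component_blocks.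
Proof.
have /and3P[_ _ C0] := components_partition.
by rewrite in_setU negb_or C0 set0_notin_singletons.
Qed.

Lemma card_component_blocks : #|component_blocks| = (n - #|VH| + n_components VH EH)%N.
Proof.
have disj : equivalence_partition (connect (adj EH)) VH :&: singletons (~: VH) = set0.
  apply/setP => B; rewrite !inE; apply/negP => /andP[/imsetP[u uV ->] /imsetP[v vV]].
  move=> /setP/(_ u); rewrite !inE uV connect0 /= => /esym/eqP uv.
  by move: vV; rewrite inE -uv uV.
have cardC : #|~: VH| = (n - #|VH|)%N by have := cardsC VH; rewrite card_ord; lia.
by rewrite cardsU disj cards0 subn0 addnC card_singletons cardC.
Qed.

Lemma component_blocks_edge e : e \in EH ->
  exists2 B, B \in component_blocks & (e.1 \in B) && (e.2 \in B).
Proof.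
move=> eH; have /andP[e1V e2V] := EHV eH.
exists [set y in VH | connect (adj EH) e.1 y]; first by rewrite inE imset_f.
rewrite !inE e1V e2V connect0 /=; apply: connect1.
by rewrite /adj -surjective_pairing eH.
Qed.

End Components.

Section ExtendedEigenvalues.
Variables (R : realType) (n : nat) (lam : 'I_n -> R).

Lemma ext_eig_nonpos (j : int) : (j <= 0)%R -> ext_eig lam j = 0.
Proof. by case: j => [[|m]|m]. Qed.

Lemma ext_eigE m (mn : (m < n)%N) : ext_eig lam (m.+1)%:Z = lam (Ordinal mn).
Proof.
rewrite /ext_eig; case: insubP => [i _ im|]; last by rewrite mn.
by congr lam; apply: val_inj.
Qed.

Lemma ext_eig_large m : (n <= m)%N -> ext_eig lam (m.+1)%:Z = 2.
Proof. by move=> nm; rewrite /ext_eig insubN // -leqNgt. Qed.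

End ExtendedEigenvalues.

Section Interlacing.
Variables (R : realType) (n : nat) (E : {set 'I_n * 'I_n}).
Variables (VH : {set 'I_n}) (EH : {set 'I_n * 'I_n}).
Variables (wKE wLE : 'I_n * 'I_n -> R) (dK dL : 'I_n -> R) (lam theta : 'I_n -> R).
Local Notation rc := (real_complex R).
Hypothesis EHV : forall e, e \in EH -> (e.1 \in VH) && (e.2 \in VH).
Hypothesis wKL_EH : forall e, e \in E -> wKE e != wLE e -> e \in EH.
Hypotheses (dK_gt0 : forall i, 0 < dK i) (dL_gt0 : forall i, 0 < dL i).
Hypotheses (dLK : forall i, dL i <= dK i) (dKL_VH : forall i, dK i != dL i -> i \in VH).
Hypothesis spK : rayleigh_spaces (lap_form E wKE) (deg_form dK) (fun i => rc (lam i)).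
Hypothesis spL : rayleigh_spaces (lap_form E wLE) (deg_form dL) (fun i => rc (theta i)).
Hypothesis lam_sorted : forall i j : 'I_n, (i <= j)%N -> lam i <= lam j.
Hypothesis theta_sorted : forall i j : 'I_n, (i <= j)%N -> theta i <= theta j.
Hypothesis theta_bounds : forall i, 0 <= theta i <= 2.

Let lam_sortedC (i j : 'I_n) : (i <= j)%N -> rc (lam i) <= rc (lam j).
Proof. by move=> ij; rewrite lecR lam_sorted. Qed.

Let theta_sortedC (i j : 'I_n) : (i <= j)%N -> rc (theta i) <= rc (theta j).
Proof. by move=> ij; rewrite lecR theta_sorted. Qed.

Lemma interlacing_lower (k : 'I_n) :
  ext_eig lam (k.+1%:Z - #|VH|%:Z + (n_components VH EH)%:Z) <= theta k.
Proof.
have : (n_components VH EH <= #|VH|)%N by exact: leq_imset_card.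
move cE: (n_components VH EH) => c c_VH; set V := #|VH| in c_VH *.
have [kc|kc] := leqP V (k + c); last first.
  by rewrite ext_eig_nonpos; [case/andP: (theta_bounds k) | lia].
have jn : (k + c - V < n)%N by have := ltn_ord k; lia.
have -> : (k.+1%:Z - V%:Z + c%:Z)%R = (k + c - V).+1%:Z by lia.
rewrite ext_eigE -lecR; set W := indicator_mx R[i] (component_blocks VH EH).
have rkW : \rank W = (n - V + c)%N.
  by rewrite indicator_mx_rank ?card_component_blocks ?cE ?trivIset_component_blocks
    ?set0_notin_component_blocks.
apply: (rayleigh_spaces_le spK spL lam_sortedC theta_sortedC (W := W)) => [|f fW|f].
- by rewrite rkW /=; lia.
- split.
    apply: qform_lap_eq => e eE /(wKL_EH eE) eH.
    have [B BW /andP[e1 e2]] := component_blocks_edge EHV eH.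
    exact: (indicator_mx_const (trivIset_component_blocks VH EH) fW BW).
  apply: ler_wpM2l (qform_deg_le _ dLK); rewrite ler0c.
  by case/andP: (theta_bounds k).
- exact: qform_deg_gt0.
Qed.

Lemma interlacing_upper (k : 'I_n) : theta k <= ext_eig lam (k.+1%:Z + #|VH|%:Z).
Proof.
have -> : (k.+1%:Z + #|VH|%:Z)%R = (k + #|VH|).+1%:Z by lia.
have [jn|jn] := ltnP (k + #|VH|) n; last first.
  by rewrite ext_eig_large //; case/andP: (theta_bounds k).
rewrite ext_eigE -lecR; set W := indicator_mx R[i] (singletons (~: VH)).
have rkW : \rank W = (n - #|VH|)%N.
  rewrite indicator_mx_rank ?card_singletons ?trivIset_singletons
    ?set0_notin_singletons //.
  by have := cardsC VH; rewrite card_ord; lia.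
have W0 (f : 'rV_n) i : (f <= W)%MS -> i \in VH -> f 0 i = 0.
  move=> fW iV; apply: indicator_mx_vanish fW _ => B.
  by apply: notin_singletons; rewrite inE negbK.
apply: (rayleigh_spaces_le spL spK theta_sortedC lam_sortedC (W := W)) => [|f fW|f].
- by rewrite rkW /=; lia.
- split.
    apply: qform_lap_eq => e eE /eqP/nesym/eqP /(wKL_EH eE) /EHV /andP[e1 e2].
    by rewrite !W0.
  by rewrite (@qform_deg_eq _ _ dK dL) // => i /dKL_VH; apply: W0.
- exact: qform_deg_gt0.
Qed.

End Interlacing.

Section FillZeros.
Variables (R : realType) (n : nat).

Definition fill_zeros (w d0 : 'I_n -> R) i : R := if w i == 0 then d0 i else w i.

Lemma fill_zeros_gt0 (w d0 : 'I_n -> R) i :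
  (forall i, 0 <= w i) -> (forall i, 0 < d0 i) -> 0 < fill_zeros w d0 i.
Proof.
move=> w_ge0 d0_gt0; rewrite /fill_zeros; case: eqP => // /eqP.
by rewrite lt_def w_ge0 andbT.
Qed.

Lemma fill_zerosE (w d0 : 'I_n -> R) i : w i != 0 -> fill_zeros w d0 i = w i.
Proof. by rewrite /fill_zeros => /negPf->. Qed.

Lemma fill_zeros_le (w w' d0 : 'I_n -> R) i : 0 <= w i <= w' i ->
  fill_zeros w (fill_zeros w' d0) i <= fill_zeros w' d0 i.
Proof.
case/andP=> w_ge0 ww'; rewrite /fill_zeros; case: eqP => // /eqP w0.
by rewrite gt_eqF // (lt_le_trans _ ww') // lt_def w0.
Qed.

Lemma fill_zeros_eq (w w' d0 : 'I_n -> R) i : w i = w' i ->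
  fill_zeros w (fill_zeros w' d0) i = fill_zeros w' d0 i.
Proof. by rewrite /fill_zeros => ->; case: eqP. Qed.

End FillZeros.

Lemma weight_difference_bounds (R : realType) (T : finType) (A : {set T})
    (w wH : T -> R) x :
  0 <= w x -> (x \in A -> 0 <= wH x <= w x) ->
  0 <= w x - (if x \in A then wH x else 0) <= w x.
Proof.
move=> w_ge0 wHx; case: ifP => xA; rewrite ?subr0 ?lexx ?w_ge0 //.
by have /andP[wH_ge0 wHw] := wHx xA; rewrite subr_ge0 wHw lerBlDr lerDl.
Qed.

Theorem corollary2p12 (R : realType) (n : nat)
  (E : {set 'I_n * 'I_n}) (wKV : 'I_n -> R) (wKE : 'I_n * 'I_n -> R)
  (VH : {set 'I_n}) (EH : {set 'I_n * 'I_n})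
  (wHV : 'I_n -> R) (wHE : 'I_n * 'I_n -> R)
  (lam theta : 'I_n -> R) :
  is_edge_set E ->
  nonneg_weights E wKV wKE ->
  (* (H, w_H) is a subgraph of (K, w_K) *)
  subcomplex E VH EH ->
  (forall v, v \in VH -> 0 <= wHV v <= wKV v) ->
  (forall e, e \in EH -> 0 <= wHE e <= wKE e) ->
  (* w_L = w_K - w_H, with w_H extended by 0 outside H *)
  let wLV := fun v => wKV v - (if v \in VH then wHV v else 0) in
  let wLE := fun e => wKE e - (if e \in EH then wHE e else 0) in
  (* {F in K : w_L(F) > 0} is a simplicial complex *)
  (forall e, e \in E -> 0 < wLE e -> 0 < wLV e.1 /\ 0 < wLV e.2) ->
  normalizing E wKV wKE ->
  normalizing E wLV wLE ->
  eigenvalues_sorted (Lup0_mx E wKV wKE) lam ->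
  eigenvalues_sorted (Lup0_mx E wLV wLE) theta ->
  forall k : 'I_n,
    ext_eig lam (k.+1%:Z - #|VH|%:Z + (n_components VH EH)%:Z) <= theta k /\
    theta k <= ext_eig lam (k.+1%:Z + #|VH|%:Z).
Proof.
move=> Eedge [wKV_ge0 wKE_ge0] [_ EHV] HVle HEle wLV wLE _ normK normL eigK eigL k.
have wLV_le v : 0 <= wLV v <= wKV v := weight_difference_bounds (wKV_ge0 v) (HVle v).
have wnnL : nonneg_weights E wLV wLE.
  split=> [v|e eE]; first by case/andP: (wLV_le v).
  by case/andP: (weight_difference_bounds (wKE_ge0 e eE) (HEle e)).
pose dK := fill_zeros wKV (fun=> 1); pose dL := fill_zeros wLV dK.
have dK_gt0 i : 0 < dK i by apply: fill_zeros_gt0 => // _; apply: ltr01.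
have dL_gt0 i : 0 < dL i by apply: fill_zeros_gt0 => //; case: wnnL.
have dLK i : dL i <= dK i by apply: fill_zeros_le.
have dKL_VH i : dK i != dL i -> i \in VH.
  apply: contraR => iV; rewrite eq_sym; apply/eqP.
  by rewrite /dL /dK fill_zeros_eq // /wLV (negPf iV) subr0.
have wKL_EH e : e \in E -> wKE e != wLE e -> e \in EH.
  by rewrite /wLE; case: ifP => // _ _; rewrite subr0 eqxx.
have spK := Lup0_rayleigh_spaces Eedge (conj wKV_ge0 wKE_ge0) normK dK_gt0
  (@fill_zerosE _ _ _ _) eigK.
have spL := Lup0_rayleigh_spaces Eedge wnnL normL dL_gt0 (@fill_zerosE _ _ _ _) eigL.
have theta_bd := Lup0_eig_bounds Eedge wnnL normL dL_gt0 (@fill_zerosE _ _ _ _) eigL.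
have [[_ sortK] [_ sortL]] := (eigK, eigL).
split; first exact: (interlacing_lower EHV wKL_EH dK_gt0 dLK spK spL sortK sortL
  theta_bd).
exact: (interlacing_upper EHV wKL_EH dL_gt0 dKL_VH spK spL sortK sortL theta_bd).
Qed.
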